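(* Let $n\ge 2$. Then $n$ is prime if and only if the only rank-$2$ matroid on the ground set $\mathbb{Z}_n$ whose set of bases is invariant under the translation action of $\mathbb{Z}_n$ is the uniform matroid $U_{2,n}$; equivalently, iff $\mathbb{B}[\mathbb{Z}_n]$ has exactly one two-dimensional tropical subrepresentation, the one corresponding to $U_{2,n}$.
   Context: $\mathbb{Z}_n$ acts on $\binom{\mathbb{Z}_n}{2}$ by $g\cdot\{a,b\}=\{g+a,g+b\}$. Two-dimensional tropical subrepresentations of the boolean regular representation $\mathbb{B}[\mathbb{Z}_n]$ are equivalent to rank-$2$ matroids on ground set $\mathbb{Z}_n$ with basis set invariant under this action. *)

From HB Require Import structures.
From mathcomp Require Import all_boot all_order all_algebra.
Set Implicit Arguments. Unset Strict Implicit. Unset Printing Implicit Defensive.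
Import GRing.Theory.
Local Open Scope ring_scope.

Definition is_matroid_bases (T : finType) (B : {set {set T}}) : Prop :=
  B != set0 /\
  forall A1 A2, A1 \in B -> A2 \in B ->
    forall x, x \in A1 :\: A2 ->
      exists2 y, y \in A2 :\: A1 & (y |: (A1 :\ x)) \in B.

Definition is_rank2_matroid (T : finType) (B : {set {set T}}) : Prop :=
  is_matroid_bases B /\ forall A, A \in B -> #|A| = 2%N.

Definition translation_invariant (V : finZmodType) (B : {set {set V}}) : Prop :=
  forall (g : V) (A : {set V}), A \in B -> [set g + a | a in A] \in B.

Definition uniform2_bases (T : finType) : {set {set T}} :=
  [set A : {set T} | #|A| == 2%N].

From mathcomp Require Import all_boot all_order all_algebra.
Set Implicit Arguments.
Unset Strict Implicit.
Unset Printing Implicit Defensive.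
Import GRing.Theory.
Local Open Scope ring_scope.

(* In a translation-invariant rank-2 matroid on an abelian group, the nonzero
   differences [e] for which [{0, e}] is not a basis, together with [0], form a
   set closed under addition: if [{0, e}] and [{e, e + f}] (a translate of
   [{0, f}]) are non-bases, basis exchange forbids [{0, e + f}] from being a
   basis.  If the group is cyclic of prime order, a single such [e] would
   generate everything, leaving [0] without a basis partner, so the matroid is
   uniform.  Conversely, if [m] is a proper divisor of [n], the pairs with
   distinct residues mod [m] are the bases of a translation-invariant rank-2
   matroid on [Z_n] which misses [{0, m}]. *)

Lemma imset_add_set2 (V : finZmodType) (g a b : V) :
  [set g + x | x in [set a; b]] = [set g + a; g + b].
Proof. by rewrite imsetU1 imset_set1. Qed.

Section TranslationInvariantRank2.
Variables (V : finZmodType) (B : {set {set V}}).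
Hypotheses (rank2B : is_rank2_matroid B) (invB : translation_invariant B).

Lemma set2_basis_translate (a b : V) : ([set a; b] \in B) = ([set 0; b - a] \in B).
Proof.
apply/idP/idP => Bab.
- by have := invB (- a) Bab; rewrite imset_add_set2 addNr addrC.
- by have := invB a Bab; rewrite imset_add_set2 addr0 addrC subrK.
Qed.

Lemma basis_partner_exists (y : V) : exists2 w, w != y & [set y; w] \in B.
Proof.
case: rank2B => -[/set0Pn [A BA] _] card2B.
have /eqP/cards2P [p [q [pq defA]]] := card2B _ BA.
exists (y - p + q).
  by rewrite -{2}(subrK p y) (inj_eq (addrI _)) eq_sym.
by have := invB (y - p) BA; rewrite defA imset_add_set2 subrK.
Qed.

Lemma nonbasis_set2_trans (x y z : V) : x != y -> y != z ->
  [set x; y] \notin B -> [set y; z] \notin B -> [set x; z] \notin B.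
Proof.
move=> xy yz nBxy nByz; apply/negP => Bxz.
have [w wy Byw] := basis_partner_exists y.
have [_ exchB] := rank2B.1.
have wx : w != x by apply: contraNneq nBxy => <-; rewrite setUC.
have wz : w != z by apply: contraNneq nByz => <-.
have w_new : w \in [set y; w] :\: [set x; z] by rewrite !inE eqxx orbT negb_or wx wz.
have [u] := exchB _ _ Byw Bxz w w_new.
have -> : [set y; w] :\ w = [set y].
  by apply/setP => v; rewrite !inE; case: (eqVneq v w) => [->|_] /=; rewrite ?orbF ?(negbTE wy).
rewrite !inE => /andP [_ /orP [] /eqP ->].
- by apply/negP.
- by rewrite setUC; apply/negP.
Qed.

Definition parallel0 (e : V) := (e == 0) || ([set 0; e] \notin B).

Lemma parallel0D (e f : V) : parallel0 e -> parallel0 f -> parallel0 (e + f).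
Proof.
have [-> _|e0] := eqVneq e 0; first by rewrite add0r.
have [-> par_e _|f0] := eqVneq f 0; first by rewrite addr0.
rewrite /parallel0; have [//|ef0] := eqVneq (e + f) 0.
rewrite (negbTE e0) (negbTE f0) /= => nB0e nB0f; apply: (@nonbasis_set2_trans 0 e) => //.
- by rewrite eq_sym.
- by rewrite -{1}(addr0 e) (inj_eq (addrI _)) eq_sym.
- by rewrite set2_basis_translate addrAC subrr add0r.
Qed.

Lemma parallel0Mn (e : V) k : parallel0 e -> parallel0 (e *+ k).
Proof.
move=> par_e; elim: k => [|k IHk]; first by rewrite mulr0n /parallel0 eqxx.
by rewrite mulrS parallel0D.
Qed.

Lemma rank2_translation_invariant_uniform :
  (forall d w : V, d != 0 -> exists k, w = d *+ k) -> B = uniform2_bases V.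
Proof.
move=> cyclicV; apply/setP => A; rewrite inE; apply/idP/idP.
  by move=> BA; rewrite rank2B.2.
case/cards2P=> a [b [ab ->]]; apply/negPn/negP => nBab.
have par_ba : parallel0 (b - a) by rewrite /parallel0 -set2_basis_translate nBab orbT.
have [w w0 B0w] := basis_partner_exists 0.
have ba0 : b - a != 0 by rewrite subr_eq0 eq_sym.
have [k defw] := cyclicV (b - a) w ba0.
by move: par_ba => /(parallel0Mn^~ k); rewrite -defw /parallel0 (negbTE w0) B0w.
Qed.

End TranslationInvariantRank2.

Lemma Zp_prime_multiple (p : nat) (d w : 'Z_p) : prime p -> d != 0 ->
  exists k, w = d *+ k.
Proof.
move=> p_pr d0; have p_gt1 := prime_gt1 p_pr.
have d_unit : d \is a GRing.unit.
  have d_lt_p : (val d < p)%N by rewrite -[X in (_ < X)%N](Zp_cast p_gt1) ltn_ord.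
  rewrite -(natr_Zp d) unitZpE // prime_coprime // gtnNdvd // lt0n.
  by rewrite -[0%N]/(val (0 : 'Z_p)) val_eqE.
by exists (val (d^-1 * w)); rewrite -mulr_natr natr_Zp mulrA divrr // mul1r.
Qed.

Section FiberBases.
Variables (T : finType) (W : eqType) (f : T -> W).

Definition fiber_bases : {set {set T}} :=
  [set A : {set T} | [exists a, exists b, (A == [set a; b]) && (f a != f b)]].

Lemma fiber_basesP A :
  reflect (exists a b, A = [set a; b] /\ f a != f b) (A \in fiber_bases).
Proof.
rewrite inE; apply: (iffP idP).
  by case/existsP => a /existsP [b /andP [/eqP -> fab]]; exists a, b.
by case=> a [b [-> fab]]; apply/existsP; exists a; apply/existsP; exists b; rewrite eqxx.
Qed.

Lemma fiber_bases_partner A x : A \in fiber_bases -> x \in A ->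
  exists2 x', A = [set x; x'] & f x != f x'.
Proof.
case/fiber_basesP => a [b [-> fab]]; rewrite !inE => /orP [] /eqP ->.
- by exists b.
- by exists a; rewrite 1?setUC // eq_sym.
Qed.

Lemma fiber_bases_rank2 : (exists a b, f a != f b) -> is_rank2_matroid fiber_bases.
Proof.
move=> [a0 [b0 fab0]]; split; last first.
  move=> A /fiber_basesP [a [b [-> fab]]].
  by rewrite cards2 (contra_neq (fun e => congr1 f e) fab).
split; first by apply/set0Pn; exists [set a0; b0]; apply/fiber_basesP; exists a0, b0.
move=> A1 _ BA1 /fiber_basesP [c [d [-> fcd]]] x; rewrite inE => /andP [xA2 xA1].
have [x' defA1 fxx'] := fiber_bases_partner BA1 xA1.
have [y yA2 fyx'] : exists2 y, y \in [set c; d] & f y != f x'.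
  have [fcx'|] := eqVneq (f c) (f x'); last by exists c; rewrite ?inE ?eqxx.
  by exists d; rewrite ?inE ?eqxx ?orbT // -fcx' eq_sym.
exists y.
  rewrite in_setD yA2 andbT defA1 !inE negb_or; apply/andP; split.
    by apply: contraNneq xA2 => <-.
  by apply: contraNneq fyx' => ->.
have -> : A1 :\ x = [set x'].
  apply/setP => u; rewrite defA1 !inE; case: (eqVneq u x) => [->|_] //=.
  by rewrite (negbTE (contra_neq (fun e => congr1 f e) fxx')).
by apply/fiber_basesP; exists y, x'.
Qed.

Lemma fiber_bases_not_uniform (a b : T) : a != b -> f a = f b ->
  fiber_bases <> uniform2_bases T.
Proof.
move=> ab fab Bu.
have : [set a; b] \in uniform2_bases T by rewrite inE cards2 ab.
rewrite -Bu => /fiber_basesP [a' [b' [defA fab']]].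
have fab_const u : u \in [set a; b] -> f u = f a by rewrite !inE => /orP [] /eqP ->.
by move: fab'; rewrite !fab_const ?eqxx // defA !inE eqxx ?orbT.
Qed.

End FiberBases.

Lemma fiber_bases_translation_invariant (V : finZmodType) (W : zmodType) (f : V -> W) :
  {morph f : x y / x + y} -> translation_invariant (fiber_bases f).
Proof.
move=> fD g _ /fiber_basesP [a [b [-> fab]]]; apply/fiber_basesP.
by exists (g + a), (g + b); rewrite imset_add_set2 !fD (inj_eq (addrI _)).
Qed.

Definition Zp_reduce (n m : nat) (a : 'Z_n) : 'Z_m := (a : nat)%:R.

Lemma Zp_reduceD (n m : nat) : (1 < n)%N -> (1 < m)%N -> (m %| n)%N ->
  {morph @Zp_reduce n m : x y / x + y}.
Proof.
move=> n_gt1 m_gt1 mn a b; rewrite /Zp_reduce -natrD /=.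
by rewrite -(Zp_nat_mod m_gt1) modn_dvdm ?Zp_cast // Zp_nat_mod.
Qed.

Lemma Zp_proper_divisor_nonuniform (n m : nat) :
  (1 < m)%N -> (m < n)%N -> (m %| n)%N ->
  exists2 B : {set {set 'Z_n}}, is_rank2_matroid B /\ translation_invariant B
    & B <> uniform2_bases 'Z_n.
Proof.
move=> m_gt1 m_lt_n mn; have n_gt1 := ltn_trans m_gt1 m_lt_n.
pose f := @Zp_reduce n m.
exists (fiber_bases f); first split.
- apply: fiber_bases_rank2; exists 0, 1%:R.
  by rewrite /f /Zp_reduce val_Zp_nat // modn_small // eq_sym oner_neq0.
- exact: fiber_bases_translation_invariant (Zp_reduceD _ _ _).
have val_m : (m%:R : 'Z_n) = m :> nat by rewrite val_Zp_nat // modn_small.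
have m0 : (0 : 'Z_n) != m%:R.
  by apply/eqP => /(congr1 (@nat_of_ord _)); rewrite val_m => m_eq0; rewrite -m_eq0 in m_gt1.
by apply: (fiber_bases_not_uniform m0); rewrite /f /Zp_reduce val_m pchar_Zp.
Qed.

Theorem mainTheorem6 (n : nat) (hn : (1 < n)%N) :
  prime n <->
  (forall B : {set {set 'Z_n}},
     is_rank2_matroid B -> translation_invariant B -> B = uniform2_bases 'Z_n).
Proof.
split=> [n_pr B rank2B invB | all_uniform].
  apply: rank2_translation_invariant_uniform => // d w.
  exact: Zp_prime_multiple.
apply/negPn/negP => n_npr.
have m_gt1 := prime_gt1 (pdiv_prime hn).
have m_lt_n : (pdiv n < n)%N.
  rewrite ltn_neqAle pdiv_leq ?andbT; last exact: ltnW.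
  by apply: contraNneq n_npr => <-; apply: pdiv_prime.
have [B [rank2B invB] nonuniformB] := Zp_proper_divisor_nonuniform m_gt1 m_lt_n (pdiv_dvd n).
exact/nonuniformB/all_uniform.
Qed.
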